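(* Let $n=2$, let $G_1,G_2$ satisfy the standing assumptions, and let $f$ be an anonymous BIC SCF, with associated constants $c_1^\pm(f),c_2^\pm(f)$. Then $$p_1c_2^+(f)-(1-p_1)c_2^-(f)\le p_1^2\qquad\text{and}\qquad p_2c_1^+(f)-(1-p_2)c_1^-(f)\le p_2^2.$$
   Context: There are $n\ge 2$ agents $N=\{1,\dots,n\}$ choosing between a Reform $R$ and the Status quo $S$. Agent $i$ gets utility $0$ if $S$ is chosen and utility $v_i\in\mathbb{R}$ if $R$ is chosen. Values are independent random variables $\tilde v_1,\dots,\tilde v_n$, $\tilde v_i\sim G_i$ (Borel probability distributions on $\mathbb{R}$, $G_i(0)=\Pr(\tilde v_i\le 0)$). Standing assumptions: all $\tilde v_i$ have the same support $V$ with $0\notin V$; $\mathbb{E}|\tilde v_i|<\infty$; $p_i:=1-G_i(0)\in(0,1)$. An SCF is a Borel measurable $f:V^n\to[0,1]$ (probability of choosing $R$). $f$ is anonymous if $f(v)=f(\pi v)$ for every $v\in V^n$ and every permutation $\pi$ of $N$, where $\pi v=(v_{\pi(1)},\dots,v_{\pi(n)})$. $f$ is BIC if for every $i$ and all $v_i,v_i'\in V$: $v_i\,\mathbb{E}(f(v_i,\tilde v_{-i}))\ge v_i\,\mathbb{E}(f(v_i',\tilde v_{-i}))$ (expectation over $\tilde v_{-i}=(\tilde v_j)_{j\neq i}$). For a BIC $f$, the map $v_i\mapsto \mathbb{E}(f(v_i,\tilde v_{-i}))$ is constant on $\{v_i\in V:v_i<0\}$ and on $\{v_i\in V: v_i>0\}$;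 $c_i^-(f)$ and $c_i^+(f)$ denote these two constant values, respectively. *)

From HB Require Import structures.
From mathcomp Require Import all_boot all_order all_algebra.
From mathcomp Require Import all_classical all_reals all_analysis.
Set Implicit Arguments. Unset Strict Implicit. Unset Printing Implicit Defensive.
Import Order.TTheory GRing.Theory Num.Theory.
Import numFieldNormedType.Exports.
Local Open Scope classical_set_scope.
Local Open Scope ring_scope.

Definition support {R : realType} (G : probability R R) : set R :=
  [set x | forall e : R, 0 < e -> (0 < G (ball x e))%E].

(* p_i = 1 - G_i(0) = Pr(v_i > 0). *)
Definition ppos {R : realType} (G : probability R R) : R :=
  fine (G `]0, +oo[%classic).

Definition standing {R : realType} (V : set R) (G : probability R R) : Prop :=
  [/\ support G = V, ~ V 0,
      G.-integrable setT (fun x : R => (x%:E))%E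
    & 0 < ppos G < 1].

(* SCFs are f : R -> R -> R, only their
   restriction to V x V matters. *)
Definition interim1 {R : realType} (V : set R) (G2 : probability R R)
  (f : R -> R -> R) (v1 : R) : R := Rintegral G2 V (fun x => f v1 x).
Definition interim2 {R : realType} (V : set R) (G1 : probability R R)
  (f : R -> R -> R) (v2 : R) : R := Rintegral G1 V (fun x => f x v2).

Definition SCF {R : realType} (V : set R) (f : R -> R -> R) : Prop :=
  measurable_fun (V `*` V) (fun z : R * R => f z.1 z.2) /\
  forall v1 v2, V v1 -> V v2 -> 0 <= f v1 v2 <= 1.

Definition anonymous {R : realType} (V : set R) (f : R -> R -> R) : Prop :=
  forall v1 v2, V v1 -> V v2 -> f v1 v2 = f v2 v1.

Definition BIC {R : realType} (V : set R) (G1 G2 : probability R R)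
  (f : R -> R -> R) : Prop :=
  (forall v1 v1', V v1 -> V v1' ->
     v1 * interim1 V G2 f v1 >= v1 * interim1 V G2 f v1') /\
  (forall v2 v2', V v2 -> V v2' ->
     v2 * interim2 V G1 f v2 >= v2 * interim2 V G1 f v2').

Definition is_cplus1 {R : realType} V (G2 : probability R R) f (c : R) :=
  forall v, V v -> 0 < v -> interim1 V G2 f v = c.
Definition is_cminus1 {R : realType} V (G2 : probability R R) f (c : R) :=
  forall v, V v -> v < 0 -> interim1 V G2 f v = c.
Definition is_cplus2 {R : realType} V (G1 : probability R R) f (c : R) :=
  forall v, V v -> 0 < v -> interim2 V G1 f v = c.
Definition is_cminus2 {R : realType} V (G1 : probability R R) f (c : R) :=
  forall v, V v -> v < 0 -> interim2 V G1 f v = c.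

From Pilot Require Import Defs.
From HB Require Import structures.
From mathcomp Require Import all_boot all_order all_algebra.
From mathcomp Require Import all_classical all_reals all_analysis.
From mathcomp Require Import measurable_realfun lra.
Import Order.TTheory GRing.Theory Num.Theory.
Import numFieldNormedType.Exports.
Local Open Scope classical_set_scope.
Local Open Scope ring_scope.

(* Let A and B be the positive and negative parts of the support V, so that
   G(A) = p and G(B) = 1 - p, and let I(S, T) = [fmass G f S T] be the
   (G x G)-mass of f on S x T.  The constants of agent 2 give I(V, A) = c^+ p and
   I(V, B) = c^- (1 - p).  Splitting V = A + B, anonymity and Fubini give
   I(B, A) = I(A, B), while 0 <= f <= 1 gives I(A, A) <= p^2 and
   I(B, B) >= 0; hence
     c^+ p = I(A, A) + I(B, A) <= p^2 + I(A, B) + I(B, B) = p^2 + c^- (1 - p).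
   By anonymity, agent 1's interim expectation under G2 is agent 2's with G1
   replaced by G2, so the second bound is the first one for G2. *)

Section support.
Context {R : realType} (G : probability R R).

(* The k-th ball with rational center and radius, kept only if it is
   G-null: countably many null balls that cover the complement of the
   support. *)
Definition null_rat_ball (k : nat) : set R :=
  match unpickle k with
  | Some (c, r) => if pselect (G (ball (ratr c : R) (ratr r)) = 0%E)
                   then ball (ratr c : R) (ratr r) else set0
  | None => set0
  end.

Lemma measurable_null_rat_ball k : measurable (null_rat_ball k).
Proof.
rewrite /null_rat_ball; destruct (unpickle k) as [[c r]|] => /=; last exact: measurable0.
by case: (pselect _) => /= _; [exact: measurable_ball|exact: measurable0].
Qed.

Lemma null_rat_ball0 k : G (null_rat_ball k) = 0%E.
Proof.
rewrite /null_rat_ball; destruct (unpickle k) as [[c r]|] => /=; last exact: measure0.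
by case: (pselect _) => /= [|_]; last exact: measure0.
Qed.

Lemma setC_support : ~` Defs.support G = \bigcup_k null_rat_ball k.
Proof.
apply/seteqP; split => x.
- rewrite /Defs.support /= => /existsNP[e] /not_implyP[e0] /negP.
  rewrite -leNgt le_eqVlt (ltNge _ 0%E) measure_ge0 orbF => /eqP Ge0.
  have xe : x \in (ball x e : set R) by apply: mem_set; exact: ballxx.
  have [c [r [/= xcr cre]]] := open_subball_rat (ball_open x e) xe.
  exists (pickle (c, r)); first by [].
  rewrite /null_rat_ball.
  have -> : unpickle (pickle (c, r)) = Some (c, r) by exact: pickleK.
  case: (pselect _) => /= [_|[]]; first exact: set_mem xcr.
  apply: (subset_measure0 _ _ cre Ge0); exact: measurable_ball.
- move=> [k _]; rewrite /null_rat_ball; destruct (unpickle k) as [[c r]|] => //.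
  case: (pselect _) => //= Gcr0 xcr xsupp.
  pose e : R := ratr r - `|ratr c - x|.
  have := xsupp e; rewrite subr_gt0 => /(_ xcr).
  suff -> : G (ball x e) = 0%E by rewrite ltxx.
  apply: (subset_measure0 _ _ _ Gcr0); [exact: measurable_ball|exact: measurable_ball|].
  move=> y; rewrite /ball /= /e => xy.
  rewrite -(subrK x (ratr c)) -addrA (le_lt_trans (ler_normD _ _))//.
  move: xy; set a := `|_ - x|; set b := `|_ - y|; lra.
Qed.

Lemma measurable_support : measurable (Defs.support G).
Proof.
rewrite -[Defs.support G]setCK setC_support; apply: measurableC.
exact: bigcupT_measurable measurable_null_rat_ball.
Qed.

Lemma measure_setC_support : G (~` Defs.support G) = 0%E.
Proof.
apply/eqP; rewrite eq_le measure_ge0 andbT setC_support.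
apply: le_trans (measure_sigma_subadditive G measurable_null_rat_ball _ _) _ => //.
  exact: bigcupT_measurable measurable_null_rat_ball.
by rewrite eseries0 // => n _ _; exact: null_rat_ball0.
Qed.

End support.

Lemma setI_pos_neg (R : realType) (V : set R) :
  (V `&` `](0 : R), +oo[) `&` (V `&` `]-oo, 0[) = set0.
Proof.
apply/seteqP; split => // z [[_ +] [_ +]].
by rewrite /= !in_itv /= andbT => z0 /(lt_trans z0); rewrite ltxx.
Qed.

Section standing_distribution.
Context {R : realType} {V : set R} {G : probability R R}.
Hypothesis hG : standing V G.

Lemma measurable_standing_support : measurable V.
Proof. by case: hG => <- *; exact: measurable_support. Qed.

Lemma measure_setIl_standing_support A : measurable A -> G (V `&` A) = G A.
Proof.
move=> mA; have mV := measurable_standing_support.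
rewrite [RHS](measureDI G mA mV) (@subset_measure0 _ _ _ G (A `\` V) (~` V)).
- by rewrite add0e setIC.
- exact: measurableD.
- exact: measurableC.
- by move=> z [].
- by case: hG => <- *; exact: measure_setC_support.
Qed.

Lemma measure_standing_support : G V = 1%E.
Proof. by rewrite -[V]setIT measure_setIl_standing_support // probability_setT. Qed.

Lemma measure_standing_pos : G (V `&` `]0, +oo[) = (ppos G)%:E.
Proof.
rewrite measure_setIl_standing_support; last exact: measurable_itv.
by rewrite /ppos fineK //; apply: fin_num_measure; exact: measurable_itv.
Qed.

Lemma setU_standing_support :
  (V `&` `](0 : R), +oo[) `|` (V `&` `]-oo, 0[) = V.
Proof.
apply/seteqP; split=> [z [[]|[]] //|z Vz].
have : z != 0 by apply/eqP => z0; case: hG => _ + _ _; rewrite -z0.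
by rewrite neq_lt => /orP[z0|z0]; [right|left]; split=> //=; rewrite in_itv /= z0.
Qed.

Lemma measure_standing_neg : G (V `&` `]-oo, 0[) = (1 - ppos G)%:E.
Proof.
have : G V = (G (V `&` `]0%R, +oo[) + G (V `&` `]-oo, 0%R[))%E.
  rewrite -{1}setU_standing_support measureU //.
  - by apply: measurableI; [exact: measurable_standing_support|exact: measurable_itv].
  - by apply: measurableI; [exact: measurable_standing_support|exact: measurable_itv].
  exact: setI_pos_neg.
rewrite measure_standing_support measure_standing_pos.
rewrite -(fineK (fin_num_measure G _ _)); last first.
  by apply: measurableI; [exact: measurable_standing_support|exact: measurable_itv].
by move/eqP; rewrite -EFinD eqe => /eqP ->; rewrite addrC addKr.
Qed.

End standing_distribution.

Section interaction_mass.
Context {R : realType} (V : set R) (G : probability R R) (f : R -> R -> R).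
Hypothesis mV : measurable V.
Hypothesis fS : SCF V f.

Definition f_on (S T : set R) : R * R -> \bar R :=
  (fun z => (f z.1 z.2)%:E) \_ (S `*` T).

Lemma f_onE S T x y : S x -> T y -> f_on S T (x, y) = (f x y)%:E.
Proof. by move=> Sx Ty; rewrite /f_on patchE mem_set. Qed.
Arguments f_onE {S T x y}.

Lemma f_on0 S T x y : ~ (S x /\ T y) -> f_on S T (x, y) = 0%E.
Proof.
move=> STxy; rewrite /f_on patchE ifF //; apply/negbTE/negP.
by rewrite inE => -[Sx Ty]; apply: STxy.
Qed.

Lemma f_on_ge0_le1 S T z : S `<=` V -> T `<=` V -> (0 <= f_on S T z <= 1)%E.
Proof.
move=> SV TV; case: z => x y.
have [[Sx Ty]|STxy] := pselect (S x /\ T y); last by rewrite f_on0 // lexx lee01.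
have /andP[f0 f1] := fS.2 x y (SV _ Sx) (TV _ Ty).
by rewrite f_onE // !lee_fin f0 f1.
Qed.
Arguments f_on_ge0_le1 {S T}.

Lemma f_on_ge0 S T z : S `<=` V -> T `<=` V -> (0 <= f_on S T z)%E.
Proof. by move=> SV TV; case/andP: (f_on_ge0_le1 z SV TV). Qed.

Lemma measurable_f_on S T : measurable S -> measurable T ->
  S `<=` V -> T `<=` V -> measurable_fun setT (f_on S T).
Proof.
move=> mS mT SV TV; apply/(measurable_restrictT _ (measurableX mS mT)).
apply/measurable_EFinP; apply: measurable_funS fS.1; first exact: measurableX.
by move=> [x y] [/= Sx Ty]; split; [exact: SV|exact: TV].
Qed.

Lemma f_on_setU A B T x y : A `&` B = set0 ->
  f_on (A `|` B) T (x, y) = (f_on A T (x, y) + f_on B T (x, y))%E.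
Proof.
move=> AB0; have [Ty|nTy] := pselect (T y); last by rewrite !f_on0 ?adde0 // => -[].
have [Ax|nAx] := pselect (A x).
  have nBx : ~ B x by move=> Bx; have : (A `&` B) x by []; rewrite AB0.
  rewrite (f_onE (or_introl Ax) Ty) (f_onE Ax Ty).
  by rewrite (f_on0 B) ?adde0 // => -[].
have [Bx|nBx] := pselect (B x).
  rewrite (f_onE (or_intror Bx) Ty) (f_onE Bx Ty).
  by rewrite (f_on0 A) ?add0e // => -[].
rewrite !f_on0 ?adde0 //; first [by move=> [[]] | by move=> []].
Qed.

Lemma f_onC S T x y : anonymous V f -> S `<=` V -> T `<=` V ->
  f_on S T (x, y) = f_on T S (y, x).
Proof.
move=> fA SV TV; have [[Sx Ty]|STxy] := pselect (S x /\ T y).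
  by rewrite !f_onE // fA //; [exact: SV|exact: TV].
by rewrite !f_on0 // => -[Ty Sx]; apply: STxy.
Qed.

Definition fmass (S T : set R) : \bar R := (\int[G]_y \int[G]_x f_on S T (x, y))%E.

Section measurable_sets.
Variables S T : set R.
Hypotheses (mS : measurable S) (mT : measurable T) (SV : S `<=` V) (TV : T `<=` V).

Lemma measurable_f_on_pair1 y : measurable_fun setT (fun x => f_on S T (x, y)).
Proof. by apply: measurable_fun_pair1; exact: measurable_f_on. Qed.

Lemma measurable_fmass_section :
  measurable_fun setT (fun y => \int[G]_x f_on S T (x, y))%E.
Proof.
apply: (measurable_fun_fubini_tonelli_G (f_on S T)); first exact: measurable_f_on.
by move=> z; exact: f_on_ge0.
Qed.

Lemma fmass_section_ge0 y : (0 <= \int[G]_x f_on S T (x, y))%E.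
Proof. by apply: integral_ge0 => x _; exact: f_on_ge0. Qed.

Lemma fmass_ge0 : (0 <= fmass S T)%E.
Proof. by apply: integral_ge0 => y _; exact: fmass_section_ge0. Qed.

Lemma fmassC : anonymous V f -> fmass S T = fmass T S.
Proof.
move=> fA; rewrite /fmass -(fubini_tonelli (f_on S T)).
- by apply: eq_integral => x _; apply: eq_integral => y _; exact: f_onC.
- exact: measurable_f_on.
- by move=> z; exact: f_on_ge0.
Qed.

End measurable_sets.

Lemma fmass_setUl A B T : measurable A -> measurable B -> measurable T ->
  A `<=` V -> B `<=` V -> T `<=` V -> A `&` B = set0 ->
  fmass (A `|` B) T = (fmass A T + fmass B T)%E.
Proof.
move=> mA mB mT AV BV TV AB0; rewrite /fmass -ge0_integralD //; first last.
- exact: measurable_fmass_section.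
- by move=> y _; exact: fmass_section_ge0.
- exact: measurable_fmass_section.
- by move=> y _; exact: fmass_section_ge0.
apply: eq_integral => y _; rewrite -ge0_integralD //; first last.
- exact: measurable_f_on_pair1.
- by move=> x _; exact: f_on_ge0.
- exact: measurable_f_on_pair1.
- by move=> x _; exact: f_on_ge0.
by apply: eq_integral => x _; exact: f_on_setU.
Qed.

Lemma fmass_section0 S T y : ~ T y -> (\int[G]_x f_on S T (x, y) = 0)%E.
Proof.
move=> nTy; rewrite (eq_integral (cst 0%E)) ?integral0 // => x _.
by rewrite f_on0 // => -[].
Qed.

Lemma fmass_le T : measurable T -> T `<=` V -> (fmass T T <= G T * G T)%E.
Proof.
move=> mT TV; rewrite /fmass -integral_cst // integral_mkcond.
apply: ge0_le_integral => //.
- by move=> y _; exact: fmass_section_ge0.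
- exact: measurable_fmass_section.
- by apply/(measurable_restrictT _ mT); exact: measurable_cst.
move=> y _; rewrite patchE; case: ifPn => [/set_mem Ty|/negP nTy]; last first.
  by rewrite fmass_section0 // => Ty; apply: nTy; exact: mem_set.
rewrite -[leRHS]mul1e -integral_cst // integral_mkcond.
apply: ge0_le_integral => //.
- by move=> x _; exact: f_on_ge0.
- exact: measurable_f_on_pair1.
- by apply/(measurable_restrictT _ mT); exact: measurable_cst.
move=> x _; rewrite patchE; case: ifPn => [/set_mem Tx|/negP nTx].
  by case/andP: (f_on_ge0_le1 (x, y) TV TV).
by rewrite f_on0 // => -[Tx _]; apply: nTx; exact: mem_set.
Qed.

Lemma interim2E T y : measurable T -> T `<=` V -> T y ->
  (interim2 V G f y)%:E = (\int[G]_x f_on V T (x, y))%E.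
Proof.
move=> mT TV Ty; rewrite /interim2 /Rintegral.
have -> : (\int[G]_(x in V) (f x y)%:E = \int[G]_x f_on V T (x, y))%E.
  rewrite integral_mkcond; apply: eq_integral => x _.
  rewrite patchE; case: ifPn => [/set_mem Vx|/negP nVx]; first by rewrite f_onE.
  by rewrite f_on0 // => -[Vx _]; apply: nVx; exact: mem_set.
rewrite fineK // ge0_fin_numE; last exact: fmass_section_ge0.
apply: (@le_lt_trans _ _ (\int[G]_x (cst 1%E) x)%E); last first.
  by rewrite integral_cst // mul1e (le_lt_trans (probability_le1 _ _)) ?ltry.
apply: ge0_le_integral => //.
- by move=> x _; exact: f_on_ge0.
- exact: measurable_f_on_pair1.
- by move=> x _; case/andP: (f_on_ge0_le1 (x, y) (@subset_refl _ V) TV).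
Qed.
Arguments interim2E {T y}.

Lemma fmassV T c : measurable T -> T `<=` V ->
  (forall y, T y -> interim2 V G f y = c) -> fmass V T = (c%:E * G T)%E.
Proof.
move=> mT TV Tc; rewrite /fmass -integral_cst // integral_mkcond.
apply: eq_integral => y _; rewrite patchE; case: ifPn => [/set_mem Ty|/negP nTy].
  by rewrite -(Tc _ Ty) (interim2E mT TV Ty).
by rewrite fmass_section0 // => Ty; apply: nTy; exact: mem_set.
Qed.

End interaction_mass.

Lemma interim2_constants_bound {R : realType} {V : set R} {G : probability R R}
    {f : R -> R -> R} {cp cm : R} :
  standing V G -> SCF V f -> anonymous V f ->
  is_cplus2 V G f cp -> is_cminus2 V G f cm ->
  ppos G * cp - (1 - ppos G) * cm <= ppos G ^+ 2.
Proof.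
move=> hG fS fA hcp hcm; have mV := measurable_standing_support hG.
set A := V `&` `](0 : R), +oo[; set B := V `&` `]-oo, (0 : R)[.
have mA : measurable A by apply: measurableI => //; exact: measurable_itv.
have mB : measurable B by apply: measurableI => //; exact: measurable_itv.
have AV : A `<=` V by exact: subIsetl.
have BV : B `<=` V by exact: subIsetl.
have fmassVA : fmass G f V A = (cp%:E * G A)%E.
  by apply: fmassV => // y [Vy]; rewrite /= in_itv /= andbT; exact: hcp.
have fmassVB : fmass G f V B = (cm%:E * G B)%E.
  by apply: fmassV => // y [Vy]; rewrite /= in_itv /=; exact: hcm.
have fmassV_split T : measurable T -> T `<=` V ->
    fmass G f V T = (fmass G f A T + fmass G f B T)%E.
  move=> mT TV; rewrite -[in LHS](setU_standing_support hG).
  by apply: (fmass_setUl V) => //; exact: setI_pos_neg.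
have : (cp%:E * G A <= G A * G A + cm%:E * G B)%E.
  rewrite -fmassVA -fmassVB !fmassV_split // [fmass G f B A](fmassC V) //.
  by apply: leeD; [exact: (fmass_le V)|apply: leeDl; exact: (fmass_ge0 V)].
rewrite measure_standing_pos // measure_standing_neg // -!EFinM -EFinD lee_fin.
by rewrite expr2; lra.
Qed.

Lemma interim1_anonymous (R : realType) (V : set R) (G : probability R R)
    (f : R -> R -> R) (v : R) :
  anonymous V f -> V v -> interim1 V G f v = interim2 V G f v.
Proof.
move=> fA Vv; rewrite /interim1 /interim2 /Rintegral; congr fine.
by apply: eq_integral => x /set_mem Vx; rewrite fA.
Qed.

Theorem lemma2 (R : realType) (V : set R) (G1 G2 : probability R R)
  (f : R -> R -> R) (c1p c1m c2p c2m : R) :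
  standing V G1 -> standing V G2 ->
  SCF V f -> anonymous V f -> BIC V G1 G2 f ->
  is_cplus1 V G2 f c1p -> is_cminus1 V G2 f c1m ->
  is_cplus2 V G1 f c2p -> is_cminus2 V G1 f c2m ->
  ppos G1 * c2p - (1 - ppos G1) * c2m <= ppos G1 ^+ 2 /\
  ppos G2 * c1p - (1 - ppos G2) * c1m <= ppos G2 ^+ 2.
Proof.
move=> hG1 hG2 fS fA _ h1p h1m h2p h2m.
split; first exact: (interim2_constants_bound hG1 fS fA h2p h2m).
apply: (interim2_constants_bound hG2 fS fA).
- by move=> v Vv v0; rewrite -interim1_anonymous //; exact: h1p.
- by move=> v Vv v0; rewrite -interim1_anonymous //; exact: h1m.
Qed.
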